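(* Let $\mathcal{N}$ be a finite set of players (cognitive/CPC nodes) and let $\mathcal{K}$ be a finite set of primary users. For every coalition $S\subseteq\mathcal{N}$, every $i\in S$ and every $k\in\mathcal{K}$, let $u_{ik}(S)\in\mathbb{R}$ be a number depending only on $i$, $k$ and the set $S$. Fix $0<\kappa\le 1$ and define the payoff $$\phi_i(S)=\sum_{k\in\mathcal{K}}u_{ik}(S)-c(S),\qquad c(S)=\begin{cases}\kappa(|S|-1),& |S|>1,\\ 0,&\text{otherwise},\end{cases}$$ with $\phi(\emptyset)=0$, the coalition value $v(S)=\sum_{j\in S}\phi_j(S)$ (so $v(\emptyset)=0$), and for $i\in S$ $$q_i(S)=\begin{cases}\phi_i(S),&\text{if }\phi_j(S)\ge\phi_j(S\setminus\{i\})\text{ for all }j\in S\setminus\{i\},\\ -\infty,&\text{otherwise.}\end{cases}$$ For coalitions $S_1,S_2$ both containing $i$, write $S_1\succ_i S_2$ iff $q_i(S_1)>q_i(S_2)$ and $v(S_1)+v(S_2\setminus\{i\})>v(S_1\setminus\{i\})+v(S_2)$. Given a partition $\Pi$ of $\mathcal{N}$, a join operation consists of a player $i$ in its coalition $S_m\in\Pi$ and a set $S_k\in\Pi\cup\{\emptyset\}$, $S_k\neq S_m$, with $S_k\cup\{i\}\succ_i S_m$; it replaces $\Pi$ by $\Pi'=(\Pi\setminus\{S_m,S_k\})\cup\{S_m\setminus\{i\},S_k\cup\{i\}\}$ (discarding empty sets). Then, starting from any initial partition $\Pi_{\mathrm{init}}$ of $\mathcal{N}$, every sequence of partitions $\Pi_0=\Pi_{\mathrm{init}}\to\Pi_1\to\Pi_2\to\cdots$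 in which each $\Pi_{l}$ is obtained from $\Pi_{l-1}$ by a join operation is finite; i.e., the sequential join-operation process always converges to a final partition $\Pi_{\mathrm{final}}$ of $\mathcal{N}$ into disjoint coalitions, irrespective of $\Pi_{\mathrm{init}}$.
   Context: In the paper, $u_{ik}(S)$ is the negative Kullback–Leibler distance between two cooperative (Dirichlet-process-based) estimates, computed by node $i$ within coalition $S$, of the distribution of primary user $k$'s activity; the only property used in the statement is that it is a real number determined by $i$, $k$ and $S$ (the game is hedonic: payoffs depend only on the members of one's own coalition). Join operations are performed one at a time in an arbitrary sequential order. *)

From HB Require Import structures.
From mathcomp Require Import all_boot all_order all_algebra.
From mathcomp Require Import constructive_ereal.
Set Implicit Arguments. Unset Strict Implicit. Unset Printing Implicit Defensive.
Import Order.TTheory GRing.Theory Num.Theory.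
Local Open Scope ring_scope.

Section Coalition.
Variables (N K : finType) (R : realFieldType).
(* u i k S : the utility u_{ik}(S) (only values with i \in S are used) *)
Variable u : N -> K -> {set N} -> R.
Variable kappa : R.

Definition cost (S : {set N}) : R :=
  if (1 < #|S|)%N then kappa * (#|S|%:R - 1) else 0.

Definition phi (i : N) (S : {set N}) : R := \sum_(k : K) u i k S - cost S.

Definition val (S : {set N}) : R := \sum_(j in S) phi j S.

Definition q (i : N) (S : {set N}) : \bar R :=
  if [forall j in S :\ i, phi j (S :\ i) <= phi j S] then (phi i S)%:E
  else -oo%E.

Definition pref (i : N) (S1 S2 : {set N}) : Prop :=
  (q i S2 < q i S1)%E /\ val (S1 :\ i) + val S2 < val S1 + val (S2 :\ i).

Definition join_step (P P' : {set {set N}}) : Prop :=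
  exists (i : N) (Sm Sk : {set N}),
    [/\ Sm \in P, i \in Sm, (Sk \in P \/ Sk = set0) & Sk != Sm] /\
    pref i (i |: Sk) Sm /\
        P' = ((P :\ Sm :\ Sk) :|: [set Sm :\ i; i |: Sk]) :\ set0.
End Coalition.

From Pilot Require Import Defs.
From HB Require Import structures.
From mathcomp Require Import all_boot all_order all_algebra.
From mathcomp Require Import constructive_ereal.
Import Order.TTheory GRing.Theory Num.Theory.
Local Open Scope ring_scope.

(* The social welfare W(P) = sum_(S in P) v(S) is a strict potential for join
   operations.  A join replaces v(Sm) + v(Sk) by v(Sm \ {i}) + v(Sk U {i}), and
   the value clause of Sk U {i} >_i Sm says precisely that this raises W (the
   empty coalition, which a join may create or discard, has value 0).  Joins
   keep P a family of pairwise disjoint nonempty sets, so an infinite sequence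
   of joins would be a strictly W-increasing sequence in the finite type
   {set {set N}}, which is impossible. *)

Lemma finType_no_strict_ascent {T : finType} {d} {U : porderType d}
    (f : T -> U) (x : nat -> T) :
  ~ (forall l, (f (x l) < f (x l.+1))%O).
Proof.
move=> ascent; have mono := homo_ltn (@lt_trans _ U) ascent.
have inj_x : injective (fun l : 'I_#|T|.+1 => x l).
  move=> a b eq_ab; apply/val_inj/eqP; case: ltngtP => // ab;
    by move: (mono _ _ ab); rewrite /= eq_ab ltxx.
by move: (leq_card _ inj_x); rewrite card_ord ltnn.
Qed.

Lemma disjointsU1 (T : finType) x (A B : {set T}) :
  [disjoint x |: A & B] = (x \notin B) && [disjoint A & B].
Proof. by rewrite !disjoints_subset subUset sub1set inE. Qed.

Section JoinOperation.
Context {T : finType}.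

Definition join_partition (P : {set {set T}}) (i : T) (Sm Sk : {set T}) :=
  ((P :\ Sm :\ Sk) :|: [set Sm :\ i; i |: Sk]) :\ set0.

Context {P : {set {set T}}} {i : T} {Sm Sk : {set T}}.
Hypotheses (trivP : trivIset P) (P0 : set0 \notin P).
Hypotheses (SmP : Sm \in P) (iSm : i \in Sm).
Hypotheses (SkP : Sk \in P \/ Sk = set0) (SkSm : Sk != Sm).

Let D := P :\ Sm :\ Sk.

Lemma disjoint_source_target : [disjoint Sm & Sk].
Proof.
case: SkP => [SkP' | ->]; last by rewrite disjoints_subset setC0 subsetT.
by move/trivIsetP: trivP; apply => //; rewrite eq_sym.
Qed.

Lemma mover_notin_target : i \notin Sk.
Proof. by rewrite (disjointFr disjoint_source_target iSm). Qed.

Lemma rest_disjoint C : C \in D -> [disjoint C & Sm] && [disjoint C & Sk].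
Proof.
rewrite !in_setD1 => /and3P[CSk CSm CP]; have /trivIsetP tP := trivP.
rewrite tP //=; case: SkP => [SkP' | ->]; first exact: tP.
by rewrite disjoints_subset setC0 subsetT.
Qed.

Lemma trivIset_joined :
  trivIset (Sm :\ i |: (i |: Sk |: D)) /\ Sm :\ i \notin i |: Sk |: D.
Proof.
have trivD : trivIset D := trivIsetD _ (trivIsetD _ trivP).
have D0 : set0 \notin D by apply: contra P0; rewrite !in_setD1 => /and3P[].
have [trivD' _] : trivIset (i |: Sk |: D) /\ i |: Sk \notin D.
  apply: trivIsetU1 => // C /rest_disjoint/andP[CSm CSk].
  rewrite disjoint_sym in CSm.
  rewrite disjointsU1 [[disjoint Sk & C]]disjoint_sym CSk.
  by rewrite (disjointFr CSm iSm).
apply: trivIsetU1 => //.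
  move=> C /setU1P[-> | /rest_disjoint/andP[CSm _]].
    rewrite disjoint_sym disjointsU1 !inE eqxx /=.
    by rewrite disjoint_sym (disjointWl (subD1set Sm i) disjoint_source_target).
  by rewrite disjoint_sym (disjointWr (subD1set Sm i)).
rewrite in_setU1 negb_or D0 andbT; apply/eqP => /setP/(_ i).
by rewrite !inE eqxx.
Qed.

Lemma join_partitionE :
  join_partition P i Sm Sk = (Sm :\ i |: (i |: Sk |: D)) :\ set0.
Proof.
by rewrite /join_partition setUC -setUA setUC -setUA [D :|: _]setUC.
Qed.

Lemma join_partition_trivIset : trivIset (join_partition P i Sm Sk).
Proof.
by rewrite join_partitionE; apply: trivIsetD; case: trivIset_joined.
Qed.

Lemma join_partition_set0 : set0 \notin join_partition P i Sm Sk.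
Proof. by rewrite in_setD1 eqxx. Qed.

Lemma target_notin_rest : i |: Sk \notin D.
Proof.
apply/negP => /rest_disjoint/andP[+ _].
by rewrite disjointsU1 iSm.
Qed.

Context {R : zmodType} {w : {set T} -> R}.
Hypothesis w0 : w set0 = 0.

Lemma sum_setD1_set0 (A : {set {set T}}) :
  \sum_(S in A :\ set0) w S = \sum_(S in A) w S.
Proof.
have [A0 | A0] := boolP (set0 \in A).
  by rewrite [RHS](big_setD1 _ A0) /= w0 add0r.
apply: eq_bigl => S; rewrite in_setD1 andb_idl // => SA.
by apply: contraNneq A0 => <-.
Qed.

Lemma sum_split_source_target :
  \sum_(S in P) w S = w Sm + w Sk + \sum_(S in D) w S.
Proof.
rewrite (big_setD1 _ SmP) /= -addrA; congr (_ + _).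
case: SkP => [SkP' | Sk0]; last by rewrite /D Sk0 w0 add0r sum_setD1_set0.
by rewrite (big_setD1 Sk) //= in_setD1 SkSm.
Qed.

Lemma sum_join_partition :
  \sum_(S in join_partition P i Sm Sk) w S =
    w (Sm :\ i) + w (i |: Sk) + \sum_(S in D) w S.
Proof.
rewrite join_partitionE sum_setD1_set0 big_setU1; last by case: trivIset_joined.
by rewrite /= big_setU1 ?target_notin_rest //= addrA.
Qed.
End JoinOperation.

Definition welfare {N K : finType} {R : realFieldType}
    (u : N -> K -> {set N} -> R) (kappa : R) (P : {set {set N}}) : R :=
  \sum_(S in P) Defs.val u kappa S.

Section JoinDynamics.
Context {N K : finType} {R : realFieldType}.
Context {u : N -> K -> {set N} -> R} {kappa : R}.

Lemma val_set0 : Defs.val u kappa set0 = 0.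
Proof. exact: big_set0. Qed.

Lemma join_step_welfare {P P' : {set {set N}}} :
    trivIset P -> set0 \notin P -> join_step u kappa P P' ->
  [/\ trivIset P', set0 \notin P' & welfare u kappa P < welfare u kappa P'].
Proof.
move=> trivP P0 [i [Sm [Sk [[SmP iSm SkP SkSm] [[_ val_gain] ->]]]]].
rewrite join_partition_trivIset // join_partition_set0; split => //.
rewrite /welfare (sum_join_partition trivP P0 SmP iSm SkP SkSm val_set0).
rewrite (sum_split_source_target SmP SkP SkSm val_set0) ltrD2r.
move: val_gain; rewrite setU1K ?(mover_notin_target trivP SmP iSm SkP SkSm) //.
by rewrite addrC [X in _ < X]addrC.
Qed.
End JoinDynamics.

Theorem theorem1 (N K : finType) (R : realFieldType)
  (u : N -> K -> {set N} -> R) (kappa : R)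
  (hk0 : 0 < kappa) (hk1 : kappa <= 1)
  (Pi : nat -> {set {set N}}) (hinit : partition (Pi 0%N) [set: N]) :
  ~ (forall l : nat, join_step u kappa (Pi l) (Pi l.+1)).
Proof.
move=> steps.
have inv l : trivIset (Pi l) && (set0 \notin Pi l).
  elim: l => [|l /andP[trivP P0]]; first by case/and3P: hinit => _ -> ->.
  by case: (join_step_welfare trivP P0 (steps l)) => -> ->.
apply: (finType_no_strict_ascent (welfare u kappa) Pi) => l.
by case/andP: (inv l) => trivP P0; case: (join_step_welfare trivP P0 (steps l)).
Qed.
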